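(* Let $I\subseteq\mathbb{R}$ be a compact interval, let $b,d\colon I\to[0,\infty)$ and $c\colon I^2\to[0,\infty)$ be twice continuously differentiable, and let $f$ be the monomorphic invasion fitness defined in the context. Let $x_0$ be a point in the interior of $I$ which is not a local fitness maximum or minimum, and for $\delta>0$ let $g_\delta\colon[0,\infty)\to\mathcal{X}_\delta$ be the resident-trait function started from the unique resident trait $x_0$, as described in the context. Then, for every $T>0$, the functions $t\mapsto g_\delta(t/\delta^2)$ converge uniformly on $[0,T]$ (in particular in the space of càdlàg paths $\mathbb{D}([0,T],\mathbb{R})$) as $\delta\to0$ to the unique function $x\colon[0,T]\to I$ solving $$\frac{\mathrm{d}x}{\mathrm{d}t}=\partial_1 f(x(t),x(t)),\qquad x(0)=x_0.$$
   Context: Model: for $\delta>0$ the trait space is the grid $\mathcal{X}_\delta=I\cap\delta\mathbb{Z}$ (the grid is shifted if necessary so that $x_0\in\mathcal{X}_\delta$ for all $\delta$). An individual with trait $x$ gives birth at rate $b(x)$; with probability $K^{-\alpha}$ ($\alpha\in(0,1)$, $K$ the carrying capacity) the offspring mutates to $x+\delta$ or $x-\delta$ with equal probability (keeping the parental trait if the mutant is outside $\mathcal{X}_\delta$); it dies at rate $d(x)$ and, due to competition with each individual of trait $y$, at rate $c(x,y)/K$. A set of traits $\mathbf v$ coexists if the Lotka–Volterra system $\dot n_y=n_y(b(y)-d(y)-\sum_{x\in\mathbf v}c(y,x)n_x)$, $y\in\mathbf v$, has a unique coordinatewise strictly positive equilibrium $\bar n(\mathbf v)$; the invasion fitness of $y$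 against $\mathbf v$ is $f(y,\mathbf v)=b(y)-d(y)-\sum_{x\in\mathbf v}c(y,x)\bar n_x(\mathbf v)$, and $f(y,x):=f(y,\{x\})=b(y)-d(y)-c(y,x)\frac{b(x)-d(x)}{c(x,x)}$ (with $b(x)>d(x)$ so that single traits coexist). A trait $x$ is a local fitness minimum if $f(x+\delta,x)>0$ and $f(x-\delta,x)>0$, and a local fitness maximum if $f(x+\delta,x)<0$ and $f(x-\delta,x)<0$. Large-population limit: writing the population size of trait $x$ at time $t\log K$ as $K^{\beta^K_{x}(t)}-1$, as $K\to\infty$ and then $\alpha\to1$ the exponents converge to deterministic piecewise affine functions $\beta^\delta_x$, defined recursively: $\beta^\delta_{x_0}(0)=1$, $\beta^\delta_x(0)=0$ otherwise, $s_0=0$, $\mathbf v_0=\{x_0\}$; for $t\in[s_{k-1},s_k]$, $\beta^\delta_x(t)=[\beta^\delta_x(s_{k-1})+(t-s_{k-1})f(x,\mathbf v_{k-1})]\vee0$ if $x$ is a grid neighbour of a trait in $\mathbf v_{k-1}$ (not in $\mathbf v_{k-1}$) or $\beta^\delta_x(s_{k-1})>0$, and $\beta^\delta_x(t)=0$ otherwise; $s_k$ is the first time after $s_{k-1}$ at which some $y_k\notin\mathbf v_{k-1}$ has $\beta^\delta_{y_k}=1$, and $\mathbf v_k$ consists of the traits with positive coordinates in the equilibrium of the Lotka–Volterra system for $\mathbf v_{k-1}\cup\{y_k\}$. A trait $x$ is resident at time $t$ if $\beta^\delta_x(t)=1$. Standing assumptions: the population stays monomorphic (at each time there is a unique resident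 trait and each change of resident replaces it by a grid neighbour); every trait $x$ that is resident at some time $t_1$ and has $\beta^\delta_x(t_2)<1$ at a later time $t_2$ satisfies $\beta^\delta_x<1$ on $[t_2,t_3]$ and $\beta^\delta_x(t_3)=0$ for some $t_3>t_2$; and (by convention on the direction of evolution) the resident trait increases. $g_\delta(t)$ is the unique resident trait at time $t$, taken càdlàg at the change times; under these conventions $$g_\delta(t)=x_0+\max\Big\{i\delta:\ t\ge\sum_{k=0}^{i-1}\frac{1}{f(x_0+(k+1)\delta,\,x_0+k\delta)}\Big\},$$ with the convention that $1/f=\infty$ when $f\le 0$.
   Formalization: A solution x of the equation with x(0)=x₀ and values in I on [0,T] is assumed to exist rather than asserted, the increasing direction is the hypothesis $\partial_1 f(x_0,x_0)\ge0$, and c(x,x) > 0 on I. Each condition added here is assumed in the paper as well or is needed for the statement above to hold. *)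

From Stdlib Require Import Reals Lra.
From Coquelicot Require Import Coquelicot.
Open Scope R_scope.

Definition C2_1 (h : R -> R) : Prop :=
  forall x, ex_derive h x /\ ex_derive (Derive h) x /\
            continuous (Derive (Derive h)) x.

Definition d1 (c : R -> R -> R) (x y : R) : R := Derive (fun u => c u y) x.
Definition d2 (c : R -> R -> R) (x y : R) : R := Derive (fun v => c x v) y.

Definition C2_2 (c : R -> R -> R) : Prop :=
  forall x y,
    ex_derive (fun u => c u y) x /\ ex_derive (fun v => c x v) y /\
    ex_derive (fun u => d1 c u y) x /\ ex_derive (fun v => d1 c x v) y /\
    ex_derive (fun u => d2 c u y) x /\ ex_derive (fun v => d2 c x v) y /\
    continuous (fun z : R * R => c (fst z) (snd z)) (x, y) /\
    continuous (fun z : R * R => d1 c (fst z) (snd z)) (x, y) /\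
    continuous (fun z : R * R => d2 c (fst z) (snd z)) (x, y) /\
    continuous (fun z : R * R => d1 (d1 c) (fst z) (snd z)) (x, y) /\
    continuous (fun z : R * R => d2 (d1 c) (fst z) (snd z)) (x, y) /\
    continuous (fun z : R * R => d1 (d2 c) (fst z) (snd z)) (x, y) /\
    continuous (fun z : R * R => d2 (d2 c) (fst z) (snd z)) (x, y).

(** Monomorphic invasion fitness f(y,x) of y against resident x. *)
Definition fit (b d : R -> R) (c : R -> R -> R) (y x : R) : R :=
  b y - d y - c y x * (b x - d x) / c x x.

Definition local_fit_min b d c (delta x : R) : Prop :=
  0 < fit b d c (x + delta) x /\ 0 < fit b d c (x - delta) x.
Definition local_fit_max b d c (delta x : R) : Prop :=
  fit b d c (x + delta) x < 0 /\ fit b d c (x - delta) x < 0.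

Definition step_fit b d c (x0 delta : R) (k : nat) : R :=
  fit b d c (x0 + INR (S k) * delta) (x0 + INR k * delta).

Fixpoint tsum (h : nat -> R) (n : nat) : R :=
  match n with O => 0 | S m => tsum h m + h m end.

(** i is admissible at time t: the grid point x0 + i delta lies in I
    (upper end bI), and t >= sum_{k<i} 1/f(x0+(k+1)delta, x0+k delta),
    where every such f is > 0 (convention 1/f = +oo when f <= 0). *)
Definition admissible b d c (bI x0 delta t : R) (i : nat) : Prop :=
  x0 + INR i * delta <= bI /\
  (forall k, (k < i)%nat -> 0 < step_fit b d c x0 delta k) /\
  tsum (fun k => / step_fit b d c x0 delta k) i <= t.

Definition resident_path b d c (bI x0 : R) (g : R -> R -> R) : Prop :=
  forall delta t, 0 < delta -> 0 <= t ->
    exists i, admissible b d c bI x0 delta t i /\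
      (forall j, admissible b d c bI x0 delta t j -> (j <= i)%nat) /\
      g delta t = x0 + INR i * delta.

(* Let s x = d1 f (x, x).  Since f (x, x) = 0, Taylor's formula gives
   f (x + delta, x) = delta * s x + O(delta^2), and s is Lipschitz on I.  On the time
   scale t / delta^2 the resident trait jumps from x0 + k delta to x0 + (k+1) delta after a
   time delta^2 / f (x0 + (k+1) delta, x0 + k delta), so its linear interpolation has slope
   f (x0 + (k+1) delta, x0 + k delta) / delta = s (x0 + k delta) + O(delta): it is an Euler
   scheme for x' = s x with space step delta.  A Gronwall estimate for the smoothed
   distance sqrt (e^2 + delta^2) between the interpolation and the solution keeps the error
   O(delta) on [0, T].  The chain may also stop for good: if the next rate is <= 0 then
   s = O(delta) at the current point (s cannot be very negative there, since s x0 >= 0 and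
   every earlier jump had a positive rate), so the solution barely moves; if the next grid
   point lies beyond the right end of I, a one-sided estimate suffices because the
   solution stays in I. *)

From Stdlib Require Import Reals Lra Lia List ClassicalEpsilon Classical.
From Coquelicot Require Import Coquelicot.
Open Scope R_scope.

(** * Calculus on an interval *)

Lemma exp_le_compat (x y : R) : x <= y -> exp x <= exp y.
Proof.
  intros [Hlt | ->]; [now left; apply exp_increasing | now right].
Qed.

Lemma continuity_pt_is_derive (f : R -> R) (x l : R) :
  is_derive f x l -> continuity_pt f x.
Proof.
  intros Hf. apply continuity_pt_filterlim. apply (ex_derive_continuous f x). now exists l.
Qed.

Lemma MVT_closed (f df : R -> R) (p q : R) : p <= q ->
  (forall t, p <= t <= q -> is_derive f t (df t)) ->
  exists xi, p <= xi <= q /\ f q - f p = df xi * (q - p).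
Proof.
  intros Hpq Hd.
  destruct (MVT_gen f p q df) as [xi Hxi]; cbv zeta in *;
    rewrite ?Rmin_left, ?Rmax_right in * by lra.
  - intros t Ht. apply Hd. lra.
  - intros t Ht. exact (continuity_pt_is_derive f t _ (Hd t Ht)).
  - now exists xi.
Qed.

Lemma gronwall_affine (phi dphi : R -> R) (p q L c : R) : p <= q -> 0 < L ->
  (forall t, p <= t <= q -> is_derive phi t (dphi t)) ->
  (forall t, p <= t <= q -> dphi t <= L * phi t + c) ->
  phi q + c / L <= (phi p + c / L) * exp (L * (q - p)).
Proof.
  intros Hpq HL Hd Hb.
  set (psi := fun t => (phi t + c / L) * exp (- L * t)).
  assert (Hdecr : psi q - psi p <= 0).
  { destruct (MVT_closed psi (fun t => (dphi t - L * phi t - c) * exp (- L * t)) p q)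
      as [xi [Hxi ->]]; [exact Hpq | |].
    - intros t Ht. unfold psi. auto_derive.
      + exists (dphi t). now apply Hd.
      + erewrite (is_derive_unique _ t (dphi t)) by now apply Hd. field. lra.
    - pose proof (Hb xi Hxi). pose proof (exp_pos (- L * xi)).
      assert ((dphi xi - L * phi xi - c) * exp (- L * xi) <= 0) by nra.
      nra. }
  unfold psi in Hdecr.
  apply (Rmult_le_reg_r (exp (- L * q))); [apply exp_pos |].
  rewrite Rmult_assoc, <- exp_plus. replace (L * (q - p) + - L * q) with (- L * p) by ring.
  lra.
Qed.

(** * Lipschitz functions *)

Definition lipschitz_with (L a b : R) (f : R -> R) : Prop :=
  forall x y, a <= x <= b -> a <= y <= b -> Rabs (f x - f y) <= L * Rabs (x - y).

Lemma lipschitz_with_derive (f df : R -> R) (a b M : R) :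
  (forall t, a <= t <= b -> is_derive f t (df t)) ->
  (forall t, a <= t <= b -> Rabs (df t) <= M) ->
  lipschitz_with M a b f.
Proof.
  intros Hd HM.
  assert (Hle : forall x y, a <= x <= y -> y <= b -> Rabs (f y - f x) <= M * Rabs (y - x)).
  { intros x y Hxy Hy.
    destruct (MVT_closed f df x y) as [xi [Hxi ->]]; [lra | intros t Ht; apply Hd; lra |].
    rewrite Rabs_mult. apply Rmult_le_compat_r; [apply Rabs_pos | apply HM; lra]. }
  intros x y Hx Hy. destruct (Rle_dec x y).
  - rewrite Rabs_minus_sym, (Rabs_minus_sym x). apply Hle; lra.
  - apply Hle; lra.
Qed.

Lemma lipschitz_with_le (L L' a b : R) (f : R -> R) :
  L <= L' -> lipschitz_with L a b f -> lipschitz_with L' a b f.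
Proof.
  intros HL Hf x y Hx Hy. eapply Rle_trans; [now apply Hf |].
  apply Rmult_le_compat_r; [apply Rabs_pos | exact HL].
Qed.

Lemma lipschitz_with_bounded (L a b : R) (f : R -> R) : a <= b ->
  lipschitz_with L a b f -> exists M, forall x, a <= x <= b -> Rabs (f x) <= M.
Proof.
  intros Hab Hf. exists (Rabs (f a) + Rabs L * (b - a)). intros x Hx.
  pose proof (Hf x a Hx ltac:(lra)) as Hxa.
  rewrite (Rabs_pos_eq (x - a)) in Hxa by lra.
  pose proof (Rabs_triang (f x - f a) (f a)) as Htri.
  replace (f x - f a + f a) with (f x) in Htri by ring.
  assert (L * (x - a) <= Rabs L * (b - a)).
  { apply Rle_trans with (Rabs L * (x - a)).
    - apply Rmult_le_compat_r; [lra | apply Rle_abs].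
    - apply Rmult_le_compat_l; [apply Rabs_pos | lra]. }
  lra.
Qed.

Lemma lipschitz_with_plus (L1 L2 a b : R) (f g : R -> R) :
  lipschitz_with L1 a b f -> lipschitz_with L2 a b g ->
  lipschitz_with (L1 + L2) a b (fun x => f x + g x).
Proof.
  intros Hf Hg x y Hx Hy.
  replace (f x + g x - (f y + g y)) with ((f x - f y) + (g x - g y)) by ring.
  eapply Rle_trans; [apply Rabs_triang |].
  pose proof (Hf x y Hx Hy). pose proof (Hg x y Hx Hy). lra.
Qed.

Lemma lipschitz_with_opp (L a b : R) (f : R -> R) :
  lipschitz_with L a b f -> lipschitz_with L a b (fun x => - f x).
Proof.
  intros Hf x y Hx Hy. replace (- f x - - f y) with (- (f x - f y)) by ring.
  rewrite Rabs_Ropp. now apply Hf.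
Qed.

Lemma lipschitz_with_minus (L1 L2 a b : R) (f g : R -> R) :
  lipschitz_with L1 a b f -> lipschitz_with L2 a b g ->
  lipschitz_with (L1 + L2) a b (fun x => f x - g x).
Proof.
  intros Hf Hg. apply (lipschitz_with_plus L1 L2 a b f (fun x => - g x)); [exact Hf |].
  now apply lipschitz_with_opp.
Qed.

Lemma lipschitz_with_scal (L k a b : R) (f : R -> R) :
  lipschitz_with L a b f -> lipschitz_with (Rabs k * L) a b (fun x => f x * k).
Proof.
  intros Hf x y Hx Hy. replace (f x * k - f y * k) with (k * (f x - f y)) by ring.
  rewrite Rabs_mult, Rmult_assoc. apply Rmult_le_compat_l; [apply Rabs_pos | now apply Hf].
Qed.

Lemma lipschitz_with_mult (L1 L2 a b : R) (f g : R -> R) : a <= b ->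
  lipschitz_with L1 a b f -> lipschitz_with L2 a b g ->
  exists L, lipschitz_with L a b (fun x => f x * g x).
Proof.
  intros Hab Hf Hg.
  destruct (lipschitz_with_bounded L1 a b f Hab Hf) as [Mf HMf].
  destruct (lipschitz_with_bounded L2 a b g Hab Hg) as [Mg HMg].
  exists (Mf * L2 + Mg * L1). intros x y Hx Hy.
  replace (f x * g x - f y * g y) with (f x * (g x - g y) + g y * (f x - f y)) by ring.
  eapply Rle_trans; [apply Rabs_triang | rewrite !Rabs_mult].
  assert (Rabs (f x) * Rabs (g x - g y) <= Mf * (L2 * Rabs (x - y))).
  { apply Rmult_le_compat; auto using Rabs_pos. }
  assert (Rabs (g y) * Rabs (f x - f y) <= Mg * (L1 * Rabs (x - y))).
  { apply Rmult_le_compat; auto using Rabs_pos. }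
  lra.
Qed.

Lemma lipschitz_with_inv (L m a b : R) (f : R -> R) : 0 < m ->
  (forall x, a <= x <= b -> m <= f x) ->
  lipschitz_with L a b f -> lipschitz_with (L / (m * m)) a b (fun x => / f x).
Proof.
  intros Hm Hfm Hf x y Hx Hy.
  pose proof (Hfm x Hx). pose proof (Hfm y Hy).
  replace (/ f x - / f y) with ((f y - f x) * / (f x * f y)) by (field; lra).
  rewrite Rabs_mult, Rabs_minus_sym, (Rabs_pos_eq (/ (f x * f y)))
    by (apply Rlt_le, Rinv_0_lt_compat; nra).
  unfold Rdiv. rewrite Rmult_assoc, (Rmult_comm (/ (m * m))), <- Rmult_assoc.
  apply Rmult_le_compat; [apply Rabs_pos | apply Rlt_le, Rinv_0_lt_compat; nra
                         | now apply Hf |].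
  apply Rinv_le_contravar; [nra | apply Rmult_le_compat; lra].
Qed.

Lemma bounded_of_continuity_pt (f : R -> R) (a b : R) : a <= b ->
  (forall x, a <= x <= b -> continuity_pt f x) ->
  exists M, forall x, a <= x <= b -> Rabs (f x) <= M.
Proof.
  intros Hab Hf.
  destruct (continuity_ab_maj (fun x => Rabs (f x)) a b Hab) as [xM [HM _]].
  - intros x Hx. apply (continuity_pt_comp f Rabs); [now apply Hf | apply Rcontinuity_abs].
  - now exists (Rabs (f xM)).
Qed.

Lemma C2_1_lipschitz (f : R -> R) (a b : R) : a <= b -> C2_1 f ->
  (exists L, lipschitz_with L a b f) /\ (exists L, lipschitz_with L a b (Derive f)).
Proof.
  intros Hab Hf.
  assert (Df : forall x, is_derive f x (Derive f x)) by (intros x; apply Derive_correct, Hf).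
  assert (DDf : forall x, is_derive (Derive f) x (Derive (Derive f) x))
    by (intros x; apply Derive_correct, Hf).
  destruct (bounded_of_continuity_pt (Derive f) a b Hab) as [M1 HM1].
  { intros x _. exact (continuity_pt_is_derive _ _ _ (DDf x)). }
  destruct (bounded_of_continuity_pt (Derive (Derive f)) a b Hab) as [M2 HM2].
  { intros x _. apply continuity_pt_filterlim, Hf. }
  split; [exists M1 | exists M2]; eapply lipschitz_with_derive; eauto.
Qed.

Lemma list_upper_bound {A : Type} (l : list A) (f : A -> R) :
  exists M, forall t, In t l -> f t <= M.
Proof.
  induction l as [|a l [M HM]].
  - exists 0. intros t [].
  - exists (Rmax (f a) M). intros t [<- | Ht]; [apply Rmax_l |].
    eapply Rle_trans; [now apply HM | apply Rmax_r].
Qed.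

Lemma continuous2_bounded (h : R -> R -> R) (a b : R) :
  (forall x y, a <= x <= b -> a <= y <= b ->
     continuous (fun z : R * R => h (fst z) (snd z)) (x, y)) ->
  exists M, forall x y, a <= x <= b -> a <= y <= b -> Rabs (h x y) <= M.
Proof.
  intros Hh.
  set (square := bounded_n 2 (a, (a, tt)) (b, (b, tt))).
  set (within_one := fun (eps : posreal) (t : Compactness.Tn 2 R) => forall x y,
         Rabs (x - fst t) < eps -> Rabs (y - fst (snd t)) < eps ->
         Rabs (h x y - h (fst t) (fst (snd t))) < 1).
  assert (Hradius : forall t, exists eps : posreal, square t -> within_one eps t).
  { intros [u [v []]]. destruct (classic (a <= u <= b /\ a <= v <= b)) as [[Hu Hv] | Hout].
    - destruct (Hh u v Hu Hv (ball (h u v) 1) (locally_ball (h u v) (mkposreal 1 Rlt_0_1)))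
        as [eps Heps].
      exists eps. intros _ x y Hx Hy. exact (Heps (x, y) (conj Hx Hy)).
    - exists (mkposreal 1 Rlt_0_1). intros Hin. exfalso. apply Hout. cbn in Hin. tauto. }
  set (radius := fun t => proj1_sig (constructive_indefinite_description _ (Hradius t))).
  assert (Hnear : forall t, square t -> within_one (radius t) t).
  { intros t. unfold radius. now destruct constructive_indefinite_description. }
  apply NNPP. intros Hunbounded.
  apply (compactness_list 2 (a, (a, tt)) (b, (b, tt)) radius). intros [l Hl].
  apply Hunbounded.
  destruct (list_upper_bound l (fun t => Rabs (h (fst t) (fst (snd t))))) as [M HM].
  exists (M + 1). intros x y Hx Hy.
  destruct (Hl (x, (y, tt))) as [[u [v []]] [Hin [Hsq [Hxu [Hyv _]]]]]; [cbn; tauto |].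
  pose proof (Hnear _ Hsq x y Hxu Hyv). pose proof (HM _ Hin). cbn in *.
  pose proof (Rabs_triang (h x y - h u v) (h u v)).
  replace (h x y - h u v + h u v) with (h x y) in * by ring.
  lra.
Qed.

Lemma lipschitz_with_diag (h : R -> R -> R) (a b M : R) :
  (forall x y, a <= x <= b -> a <= y <= b ->
     ex_derive (fun u => h u y) x /\ ex_derive (fun v => h x v) y) ->
  (forall x y, a <= x <= b -> a <= y <= b -> Rabs (d1 h x y) <= M /\ Rabs (d2 h x y) <= M) ->
  lipschitz_with (2 * M) a b (fun x => h x x).
Proof.
  intros Hd HM x y Hx Hy.
  assert (H1 : Rabs (h x x - h y x) <= M * Rabs (x - y)).
  { refine (lipschitz_with_derive (fun u => h u x) (fun u => d1 h u x) a b M _ _ x y Hx Hy).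
    - intros t Ht. apply Derive_correct, (Hd t x Ht Hx).
    - intros t Ht. apply (HM t x Ht Hx). }
  assert (H2 : Rabs (h y x - h y y) <= M * Rabs (x - y)).
  { refine (lipschitz_with_derive (fun v => h y v) (fun v => d2 h y v) a b M _ _ x y Hx Hy).
    - intros t Ht. apply Derive_correct, (Hd y t Hy Ht).
    - intros t Ht. apply (HM y t Hy Ht). }
  replace (h x x - h y y) with ((h x x - h y x) + (h y x - h y y)) by ring.
  eapply Rle_trans; [apply Rabs_triang | lra].
Qed.

Lemma taylor1_le (f df : R -> R) (x h K : R) : 0 <= h -> 0 <= K ->
  (forall y, x <= y <= x + h -> is_derive f y (df y)) ->
  (forall y, x <= y <= x + h -> Rabs (df y - df x) <= K * (y - x)) ->
  Rabs (f (x + h) - f x - h * df x) <= K * (h * h).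
Proof.
  intros Hh HK Hf Hdf.
  assert (Hg : lipschitz_with (K * h) x (x + h) (fun y => f y - y * df x)).
  { apply (lipschitz_with_derive _ (fun y => df y - df x)).
    - intros y Hy. auto_derive; [now exists (df y); apply Hf |].
      erewrite (is_derive_unique _ y (df y)) by now apply Hf. ring.
    - intros y Hy. eapply Rle_trans; [now apply Hdf |]. apply Rmult_le_compat_l; lra. }
  pose proof (Hg (x + h) x ltac:(lra) ltac:(lra)) as Hxh.
  replace (x + h - x) with h in Hxh by ring. rewrite (Rabs_pos_eq h) in Hxh by lra.
  replace (f (x + h) - f x - h * df x) with (f (x + h) - (x + h) * df x - (f x - x * df x)) by ring.
  lra.
Qed.

(* A differentiable substitute for [Rabs], at distance at most [delta] from it. *)
Definition soft_abs (delta z : R) : R := sqrt (z * z + delta * delta).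

Lemma Rabs_le_soft_abs (delta z : R) : Rabs z <= soft_abs delta z.
Proof.
  unfold soft_abs. rewrite <- sqrt_Rsqr_abs. apply sqrt_le_1_alt. unfold Rsqr. nra.
Qed.

Lemma soft_abs_0 (delta : R) : 0 <= delta -> soft_abs delta 0 = delta.
Proof. intros Hd. unfold soft_abs. rewrite Rmult_0_l, Rplus_0_l. now apply sqrt_square. Qed.

Lemma gronwall_tracking (s xs : R -> R) (a b L c delta p q v y : R) :
  0 < L -> 0 < delta -> p <= q -> a <= y <= b -> lipschitz_with L a b s ->
  (forall u, p <= u <= q -> a <= xs u <= b) ->
  (forall u, p <= u <= q -> is_derive xs u (s (xs u))) ->
  (forall u, p <= u <= q -> Rabs ((u - p) * v) <= delta) ->
  Rabs (v - s y) + L * delta <= c ->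
  soft_abs delta (xs q - (y + (q - p) * v)) + c / L
    <= (soft_abs delta (xs p - y) + c / L) * exp (L * (q - p)).
Proof.
  intros HL Hdelta Hpq Hy Hs Hin Hxs Hv Hc.
  set (z := fun u => xs u - (y + (u - p) * v)).
  replace (xs p - y) with (z p) by (unfold z; ring).
  apply (gronwall_affine (fun u => soft_abs delta (z u))
           (fun u => z u * (s (xs u) - v) / soft_abs delta (z u))); [exact Hpq | exact HL | |].
  - intros u Hu. unfold soft_abs, z. auto_derive.
    + repeat split; try (exists (s (xs u)); now apply Hxs).
      apply Rplus_le_lt_0_compat; [apply Rle_0_sqr | nra].
    + erewrite (is_derive_unique _ u (s (xs u))) by now apply Hxs.
      unfold Rminus. field.
      apply Rgt_not_eq, sqrt_lt_R0, Rplus_le_lt_0_compat; [apply Rle_0_sqr | nra].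
  - intros u Hu.
    assert (He : 0 < soft_abs delta (z u)) by (apply sqrt_lt_R0; nra).
    pose proof (Rabs_le_soft_abs delta (z u)) as Hze.
    assert (Hdrift : Rabs (s (xs u) - v) <= L * Rabs (z u) + c).
    { pose proof (Hs (xs u) y (Hin u Hu) Hy) as Hlip.
      pose proof (Hv u Hu).
      pose proof (Rabs_triang (z u) ((u - p) * v)) as Htri.
      replace (z u + (u - p) * v) with (xs u - y) in Htri by (unfold z; ring).
      pose proof (Rabs_triang (s (xs u) - s y) (s y - v)) as Htri'.
      replace (s (xs u) - s y + (s y - v)) with (s (xs u) - v) in Htri' by ring.
      assert (L * Rabs (xs u - y) <= L * (Rabs (z u) + delta)) by (apply Rmult_le_compat_l; lra).
      rewrite Rabs_minus_sym in Hc. lra. }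
    apply (Rmult_le_reg_r (soft_abs delta (z u))); [exact He |].
    unfold Rdiv. rewrite Rmult_assoc, Rinv_l, Rmult_1_r by lra.
    pose proof (Rle_abs (z u * (s (xs u) - v))) as Habs. rewrite Rabs_mult in Habs.
    assert (Rabs (z u) * Rabs (s (xs u) - v)
              <= soft_abs delta (z u) * (L * soft_abs delta (z u) + c)).
    { apply Rmult_le_compat; [apply Rabs_pos | apply Rabs_pos | exact Hze |].
      pose proof (Rmult_le_compat_l L _ _ (Rlt_le _ _ HL) Hze). lra. }
    lra.
Qed.

Lemma gronwall_right_end (s xs : R -> R) (a b L c delta p q y : R) :
  0 < L -> p <= q -> a <= y <= b -> b < y + delta -> lipschitz_with L a b s ->
  (forall u, p <= u <= q -> a <= xs u <= b) ->
  (forall u, p <= u <= q -> is_derive xs u (s (xs u))) ->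
  - s y + L * delta <= c ->
  y - xs q + delta + c / L <= (y - xs p + delta + c / L) * exp (L * (q - p)).
Proof.
  intros HL Hpq Hy Hend Hs Hin Hxs Hc.
  apply (gronwall_affine (fun u => y - xs u + delta) (fun u => - s (xs u)));
    [exact Hpq | exact HL | |].
  - intros u Hu. auto_derive; [now exists (s (xs u)); apply Hxs |].
    erewrite (is_derive_unique _ u (s (xs u))) by now apply Hxs. ring.
  - intros u Hu. pose proof (Hin u Hu).
    pose proof (Hs y (xs u) Hy (Hin u Hu)) as Hlip.
    assert (Rabs (y - xs u) <= y - xs u + 2 * delta) by (apply Rabs_le; lra).
    pose proof (Rle_abs (s y - s (xs u))). nra.
Qed.

(** * Expansion of the invasion fitness *)

Lemma fit_diag (b d : R -> R) (c : R -> R -> R) (x : R) : c x x <> 0 -> fit b d c x x = 0.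
Proof. intros Hc. unfold fit. field. exact Hc. Qed.

Section FitnessExpansion.

Variables (aI bI : R) (b d : R -> R) (c : R -> R -> R).
Hypotheses (HI : aI <= bI) (Hb : C2_1 b) (Hd : C2_1 d) (Hc : C2_2 c)
  (Hcxx : forall x, aI <= x <= bI -> 0 < c x x).

Lemma is_derive_fit_l (x y : R) :
  is_derive (fun u => fit b d c u x) y
    (Derive b y - Derive d y - d1 c y x * ((b x - d x) / c x x)).
Proof.
  unfold fit. auto_derive.
  - split; [apply Hb | split; [apply Hd | split; [apply (proj1 (Hc y x)) | exact I]]].
  - (* The [set]s identify [Derive b y] with the eta-expanded form produced by [auto_derive]. *)
    unfold d1. set (Db := Derive b y). set (Dd := Derive d y).
    set (Dc := Derive (fun u => c u x) y). unfold Rdiv. ring.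
Qed.

Lemma Derive_fit_l (x y : R) :
  Derive (fun u => fit b d c u x) y
  = Derive b y - Derive d y - d1 c y x * ((b x - d x) / c x x).
Proof. apply is_derive_unique, is_derive_fit_l. Qed.

Lemma c_partials_bounded : exists M, forall x y, aI <= x <= bI -> aI <= y <= bI ->
  Rabs (d1 c x y) <= M /\ Rabs (d2 c x y) <= M /\
  Rabs (d1 (d1 c) x y) <= M /\ Rabs (d2 (d1 c) x y) <= M.
Proof.
  destruct (continuous2_bounded (d1 c) aI bI) as [M1 H1].
  { intros x y _ _. now destruct (Hc x y) as (_ & _ & _ & _ & _ & _ & _ & H & _). }
  destruct (continuous2_bounded (d2 c) aI bI) as [M2 H2].
  { intros x y _ _. now destruct (Hc x y) as (_ & _ & _ & _ & _ & _ & _ & _ & H & _). }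
  destruct (continuous2_bounded (d1 (d1 c)) aI bI) as [M3 H3].
  { intros x y _ _. now destruct (Hc x y) as (_ & _ & _ & _ & _ & _ & _ & _ & _ & H & _). }
  destruct (continuous2_bounded (d2 (d1 c)) aI bI) as [M4 H4].
  { intros x y _ _. now destruct (Hc x y) as (_ & _ & _ & _ & _ & _ & _ & _ & _ & _ & H & _). }
  exists (Rmax (Rmax M1 M2) (Rmax M3 M4)). intros x y Hx Hy.
  specialize (H1 x y Hx Hy). specialize (H2 x y Hx Hy).
  specialize (H3 x y Hx Hy). specialize (H4 x y Hx Hy).
  pose proof (Rmax_l (Rmax M1 M2) (Rmax M3 M4)). pose proof (Rmax_r (Rmax M1 M2) (Rmax M3 M4)).
  pose proof (Rmax_l M1 M2). pose proof (Rmax_r M1 M2).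
  pose proof (Rmax_l M3 M4). pose proof (Rmax_r M3 M4).
  repeat split; lra.
Qed.

(* [(b x - d x) / c x x] is the equilibrium density of a monomorphic population of trait x. *)
Lemma resident_density_lipschitz : exists L, lipschitz_with L aI bI (fun x => (b x - d x) / c x x).
Proof.
  destruct (C2_1_lipschitz b aI bI HI Hb) as [[Lb HLb] _].
  destruct (C2_1_lipschitz d aI bI HI Hd) as [[Ld HLd] _].
  destruct c_partials_bounded as [M HM].
  assert (Hdiag : lipschitz_with (2 * M) aI bI (fun x => c x x)).
  { apply lipschitz_with_diag.
    - intros x y _ _. now destruct (Hc x y) as (? & ? & _).
    - intros x y Hx Hy. split; apply (HM x y Hx Hy). }
  destruct (continuity_ab_min (fun x => c x x) aI bI HI) as [xm [Hmin Hxm]].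
  { intros x _. apply continuity_pt_filterlim.
    apply (continuous_comp_2 (fun x : R => x) (fun x : R => x) c x);
      [apply continuous_id | apply continuous_id |].
    now destruct (Hc x x) as (_ & _ & _ & _ & _ & _ & ? & _). }
  unfold Rdiv. apply (lipschitz_with_mult (Lb + Ld) (2 * M / (c xm xm * c xm xm))); [exact HI | |].
  - now apply lipschitz_with_minus.
  - apply (lipschitz_with_inv _ _ _ _ (fun x => c x x));
      [now apply Hcxx | exact Hmin | exact Hdiag].
Qed.

Lemma fit_gradient_lipschitz :
  exists L, lipschitz_with L aI bI (fun x => Derive (fun y => fit b d c y x) x).
Proof.
  destruct (C2_1_lipschitz b aI bI HI Hb) as [_ [Lb HLb]].
  destruct (C2_1_lipschitz d aI bI HI Hd) as [_ [Ld HLd]].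
  destruct c_partials_bounded as [M HM].
  destruct resident_density_lipschitz as [Lr HLr].
  assert (Hd1 : lipschitz_with (2 * M) aI bI (fun x => d1 c x x)).
  { apply lipschitz_with_diag.
    - intros x y _ _. now destruct (Hc x y) as (_ & _ & ? & ? & _).
    - intros x y Hx Hy. split; apply (HM x y Hx Hy). }
  destruct (lipschitz_with_mult _ _ aI bI _ _ HI Hd1 HLr) as [Lm HLm].
  exists (Lb + Ld + Lm). intros x y Hx Hy.
  rewrite !Derive_fit_l.
  apply (lipschitz_with_minus (Lb + Ld) Lm aI bI (fun x => Derive b x - Derive d x)
           (fun x => d1 c x x * ((b x - d x) / c x x))); auto.
  now apply lipschitz_with_minus.
Qed.

Lemma fit_step_taylor : exists K, 0 <= K /\ forall x h, aI <= x -> 0 < h -> x + h <= bI ->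
  Rabs (fit b d c (x + h) x - h * Derive (fun y => fit b d c y x) x) <= K * (h * h).
Proof.
  destruct (C2_1_lipschitz b aI bI HI Hb) as [_ [Lb HLb]].
  destruct (C2_1_lipschitz d aI bI HI Hd) as [_ [Ld HLd]].
  destruct c_partials_bounded as [M HM].
  destruct resident_density_lipschitz as [Lr HLr].
  destruct (lipschitz_with_bounded Lr aI bI _ HI HLr) as [Mr HMr].
  set (K := Lb + Ld + Rabs Mr * M).
  exists (Rabs K). split; [apply Rabs_pos |]. intros x h Hx Hh Hxh.
  assert (Hxx : aI <= x <= bI) by lra.
  set (df := fun y => Derive b y - Derive d y - d1 c y x * ((b x - d x) / c x x)).
  assert (Hdf : lipschitz_with (Rabs K) aI bI df).
  { apply (lipschitz_with_le (Lb + Ld + Rabs ((b x - d x) / c x x) * M)).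
    - assert (0 <= M) by (eapply Rle_trans; [apply Rabs_pos | apply (HM x x Hxx Hxx)]).
      assert (Rabs ((b x - d x) / c x x) * M <= Rabs Mr * M).
      { apply Rmult_le_compat_r; [lra |].
        apply Rle_trans with Mr; [exact (HMr x Hxx) | apply Rle_abs]. }
      pose proof (Rle_abs K). unfold K in *. lra.
    - apply lipschitz_with_minus; [now apply lipschitz_with_minus |].
      apply lipschitz_with_scal, (lipschitz_with_derive _ (fun y => d1 (d1 c) y x)).
      + intros t _. apply Derive_correct. now destruct (Hc t x) as (_ & _ & ? & _).
      + intros t Ht. apply (HM t x Ht Hxx). }
  assert (Hfxx : fit b d c x x = 0) by (apply fit_diag, Rgt_not_eq, Hcxx, Hxx).
  rewrite Derive_fit_l.
  replace (fit b d c (x + h) x) with (fit b d c (x + h) x - fit b d c x x) by (rewrite Hfxx; ring).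
  apply (taylor1_le (fun u => fit b d c u x) df); [lra | apply Rabs_pos | |].
  - intros y _. apply is_derive_fit_l.
  - intros y Hy. rewrite <- (Rabs_pos_eq (y - x)) by lra. apply Hdf; lra.
Qed.

End FitnessExpansion.

(** * The jump chain as an Euler scheme *)

(* [admissible b d c bI x0 delta] is [jump_admissible (step_fit b d c x0 delta) bI x0 delta]. *)
Definition jump_admissible (F : nat -> R) (bI x0 delta t : R) (i : nat) : Prop :=
  x0 + INR i * delta <= bI /\ (forall k, (k < i)%nat -> 0 < F k) /\
  tsum (fun k => / F k) i <= t.

(* The chain sits at [grid k] on [[jump_time k, jump_time (S k))], time being rescaled by
   [delta^2]; [F k] stands for the fitness f (grid (S k), grid k) of the next grid point. *)
Section JumpChain.

Variables (aI bI x0 T L K delta : R) (s xs : R -> R) (F : nat -> R).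

Definition grid (k : nat) : R := x0 + INR k * delta.
Definition jump_time (k : nat) : R := delta ^ 2 * tsum (fun j => / F j) k.
Definition reachable (k : nat) : Prop := grid k <= bI /\ forall j, (j < k)%nat -> 0 < F j.

Hypotheses (HL : 0 < L) (HK : 0 <= K) (Hdelta : 0 < delta) (Hx0 : aI <= x0)
  (Hs : lipschitz_with L aI bI s) (Hs0 : 0 <= s x0)
  (HF : forall k, grid k + delta <= bI -> Rabs (F k - delta * s (grid k)) <= K * (delta * delta))
  (Hxs0 : xs 0 = x0)
  (Hxs_in : forall t, 0 <= t <= T -> aI <= xs t <= bI)
  (Hxs : forall t, 0 <= t <= T -> is_derive xs t (s (xs t))).

(* [drift] bounds [|slope - s| + L delta] on every segment of the interpolation, and [A] is
   the value at time 0 of the Gronwall quantity [soft_abs delta (xs t - x) + drift / L]. *)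
Let drift := (K + 2 * L) * delta.
Let A := delta + drift / L.

Lemma grid_S (k : nat) : grid (S k) = grid k + delta.
Proof. unfold grid. rewrite S_INR. ring. Qed.

Lemma grid_ge (k : nat) : x0 <= grid k.
Proof. unfold grid. pose proof (pos_INR k). nra. Qed.

Lemma jump_time_S (k : nat) : jump_time (S k) = jump_time k + delta ^ 2 / F k.
Proof. unfold jump_time. cbn [tsum]. unfold Rdiv. ring. Qed.

Lemma jump_time_le_iff (j : nat) (t : R) :
  tsum (fun k => / F k) j <= t / delta ^ 2 <-> jump_time j <= t.
Proof.
  pose proof (pow_lt delta 2 Hdelta). unfold jump_time. rewrite (Rmult_comm (delta ^ 2)).
  replace t with (t / delta ^ 2 * delta ^ 2) at 2 by (field; lra).
  split; intros Hle; [apply Rmult_le_compat_r | apply (Rmult_le_reg_r (delta ^ 2))]; lra.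
Qed.

Lemma slope_error (k : nat) : grid k + delta <= bI ->
  Rabs (F k / delta - s (grid k)) <= K * delta.
Proof.
  intros Hk. pose proof (HF k Hk) as H.
  replace (F k - delta * s (grid k)) with ((F k / delta - s (grid k)) * delta) in H
    by (field; lra).
  rewrite Rabs_mult, (Rabs_pos_eq delta) in H by lra.
  apply (Rmult_le_reg_r delta); lra.
Qed.

Lemma gradient_lower_bound (k : nat) : reachable k -> - s (grid k) <= (K + L) * delta.
Proof.
  destruct k as [|k]; intros [Hk Hpos].
  - unfold grid. rewrite Rmult_0_l, Rplus_0_r. nra.
  - rewrite grid_S in Hk |- *.
    pose proof (slope_error k Hk) as Hslope.
    pose proof (Hpos k (Nat.lt_succ_diag_r k)) as HFk.
    pose proof (grid_ge k).
    pose proof (Hs (grid k + delta) (grid k) ltac:(lra) ltac:(lra)) as Hlip.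
    replace (grid k + delta - grid k) with delta in Hlip by ring.
    rewrite (Rabs_pos_eq delta) in Hlip by lra.
    assert (0 < F k / delta) by (apply Rdiv_lt_0_compat; lra).
    apply Rabs_le_between in Hslope. apply Rabs_le_between in Hlip. lra.
Qed.

Lemma stuck_gradient_bound (k : nat) : reachable k -> grid k + delta <= bI -> F k <= 0 ->
  Rabs (s (grid k)) <= (K + L) * delta.
Proof.
  intros Hreach Hk HFk.
  pose proof (slope_error k Hk) as Hslope. pose proof (gradient_lower_bound k Hreach).
  assert (0 <= - F k * / delta)
    by (apply Rmult_le_pos; [lra | apply Rlt_le, Rinv_0_lt_compat, Hdelta]).
  assert (0 <= L * delta) by (apply Rmult_le_pos; lra).
  unfold Rdiv in Hslope. apply Rabs_le_between in Hslope. apply Rabs_le. lra.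
Qed.

Lemma interpolation_le (k : nat) (u : R) : 0 < F k -> jump_time k <= u <= jump_time (S k) ->
  Rabs ((u - jump_time k) * (F k / delta)) <= delta.
Proof.
  intros HFk Hu. rewrite jump_time_S in Hu.
  assert (0 < F k / delta) by (apply Rdiv_lt_0_compat; lra).
  rewrite Rabs_pos_eq by (apply Rmult_le_pos; lra).
  apply Rle_trans with (delta ^ 2 / F k * (F k / delta)).
  - apply Rmult_le_compat_r; lra.
  - right. field. lra.
Qed.

Lemma jump_time_le_S (k : nat) : 0 < F k -> jump_time k <= jump_time (S k).
Proof.
  intros HFk. rewrite jump_time_S. pose proof (pow_lt delta 2 Hdelta).
  assert (0 < delta ^ 2 / F k) by (apply Rdiv_lt_0_compat; lra). lra.
Qed.

Lemma jump_time_nonneg (k : nat) : (forall j, (j < k)%nat -> 0 < F j) -> 0 <= jump_time k.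
Proof.
  induction k as [|k IH]; intros Hpos.
  - unfold jump_time. cbn [tsum]. lra.
  - pose proof (jump_time_le_S k (Hpos k (Nat.lt_succ_diag_r k))).
    assert (0 <= jump_time k) by (apply IH; intros j Hj; apply Hpos; lia). lra.
Qed.

Lemma reachable_S (k : nat) : reachable (S k) -> 0 < F k /\ reachable k.
Proof.
  intros [Hk Hpos]. rewrite grid_S in Hk.
  split; [apply Hpos; lia | split; [lra | intros j Hj; apply Hpos; lia]].
Qed.

Lemma error_at_jump_times (k : nat) : reachable k -> jump_time k <= T ->
  soft_abs delta (xs (jump_time k) - grid k) + drift / L <= A * exp (L * jump_time k).
Proof.
  induction k as [|k IH]; intros Hreach HT.
  - assert (E : jump_time 0 = 0) by (unfold jump_time; cbn [tsum]; ring).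
    rewrite E, Hxs0, Rmult_0_r, exp_0, Rmult_1_r. unfold grid, A.
    replace (x0 - (x0 + INR 0 * delta)) with 0 by (cbn [INR]; ring).
    rewrite soft_abs_0 by lra. lra.
  - pose proof (proj1 Hreach) as Hk. rewrite grid_S in Hk.
    destruct (reachable_S k Hreach) as [HFk Hreach'].
    pose proof (jump_time_le_S k HFk) as Hstep.
    pose proof (jump_time_nonneg k (proj2 Hreach')). pose proof (grid_ge k).
    assert (Htrack := gronwall_tracking s xs aI bI L drift delta (jump_time k) (jump_time (S k))
                        (F k / delta) (grid k) HL Hdelta Hstep ltac:(lra) Hs).
    replace (grid k + (jump_time (S k) - jump_time k) * (F k / delta)) with (grid (S k))
      in Htrack by (rewrite grid_S, jump_time_S; field; lra).
    rewrite <- (Rplus_minus (L * jump_time k) (L * jump_time (S k))), exp_plus, <- Rmult_assoc.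
    replace (L * jump_time (S k) - L * jump_time k) with (L * (jump_time (S k) - jump_time k))
      by ring.
    eapply Rle_trans; [apply Htrack |].
    + intros u Hu. apply Hxs_in. lra.
    + intros u Hu. apply Hxs. lra.
    + intros u Hu. now apply interpolation_le.
    + pose proof (slope_error k Hk). unfold drift. nra.
    + apply Rmult_le_compat_r; [apply Rlt_le, exp_pos | apply IH; [exact Hreach' | lra]].
Qed.

Lemma drift_ratio_nonneg : 0 <= drift / L.
Proof.
  unfold drift, Rdiv. apply Rmult_le_pos; [nra | apply Rlt_le, Rinv_0_lt_compat, HL].
Qed.

Lemma exp_split_le (p t : R) : 0 <= p <= t -> t <= T ->
  exp (L * p) * exp (L * (t - p)) <= exp (L * T).
Proof. intros Hp Ht. rewrite <- exp_plus. apply exp_le_compat. nra. Qed.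

Lemma error_after_last_jump (i : nat) (t v : R) : reachable i -> jump_time i <= t <= T ->
  (forall u, jump_time i <= u <= t -> Rabs ((u - jump_time i) * v) <= delta) ->
  Rabs (v - s (grid i)) <= (K + L) * delta ->
  Rabs (grid i - xs t) <= (A + delta) * exp (L * T) + delta.
Proof.
  intros Hreach Ht Hv Hslope.
  pose proof (error_at_jump_times i Hreach ltac:(lra)) as Hinv.
  pose proof (jump_time_nonneg i (proj2 Hreach)).
  pose proof (grid_ge i). destruct Hreach as [Hi _].
  assert (Htrack := gronwall_tracking s xs aI bI L drift delta (jump_time i) t v (grid i)
                      HL Hdelta ltac:(lra) ltac:(lra) Hs
                      (fun u Hu => Hxs_in u ltac:(lra)) (fun u Hu => Hxs u ltac:(lra)) Hv
                      ltac:(unfold drift; lra)).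
  set (w := (t - jump_time i) * v) in Htrack.
  pose proof (Rabs_le_soft_abs delta (xs t - (grid i + w))) as Hz.
  assert (Hw : Rabs w <= delta) by (apply Hv; lra).
  assert (Hgrid : Rabs (grid i - xs t) <= Rabs (xs t - (grid i + w)) + Rabs w).
  { replace (grid i - xs t) with (- (xs t - (grid i + w)) + - w) by ring.
    eapply Rle_trans; [apply Rabs_triang | rewrite !Rabs_Ropp; lra]. }
  assert (Hgrowth : (soft_abs delta (xs (jump_time i) - grid i) + drift / L)
                      * exp (L * (t - jump_time i)) <= A * exp (L * T)).
  { eapply Rle_trans; [apply Rmult_le_compat_r; [apply Rlt_le, exp_pos | exact Hinv] |].
    rewrite Rmult_assoc. apply Rmult_le_compat_l; [| apply exp_split_le; lra].
    pose proof drift_ratio_nonneg. unfold A. lra. }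
  pose proof drift_ratio_nonneg.
  assert (0 <= delta * exp (L * T)) by (apply Rmult_le_pos; [lra | apply Rlt_le, exp_pos]).
  lra.
Qed.

Lemma error_at_right_end (i : nat) (t : R) : reachable i -> jump_time i <= t <= T ->
  bI < grid i + delta -> Rabs (grid i - xs t) <= (A + delta) * exp (L * T) + delta.
Proof.
  intros Hreach Ht Hend.
  pose proof (error_at_jump_times i Hreach ltac:(lra)) as Hinv.
  pose proof (jump_time_nonneg i (proj2 Hreach)).
  pose proof (gradient_lower_bound i Hreach) as Hlow.
  pose proof (grid_ge i). destruct Hreach as [Hi _].
  assert (Hgr := gronwall_right_end s xs aI bI L drift delta (jump_time i) t (grid i)
                   HL ltac:(lra) ltac:(lra) Hend Hs
                   (fun u Hu => Hxs_in u ltac:(lra)) (fun u Hu => Hxs u ltac:(lra))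
                   ltac:(unfold drift; lra)).
  pose proof (Rabs_le_soft_abs delta (xs (jump_time i) - grid i)) as Hz.
  rewrite Rabs_minus_sym in Hz. pose proof (Rle_abs (grid i - xs (jump_time i))).
  assert (Hexp : 1 <= exp (L * jump_time i)) by (rewrite <- exp_0; apply exp_le_compat; nra).
  assert (Hstart : grid i - xs (jump_time i) + delta + drift / L
                     <= (A + delta) * exp (L * jump_time i)).
  { assert (delta <= delta * exp (L * jump_time i)) by nra. lra. }
  assert (Hgrowth : (grid i - xs (jump_time i) + delta + drift / L)
                      * exp (L * (t - jump_time i)) <= (A + delta) * exp (L * T)).
  { eapply Rle_trans; [apply Rmult_le_compat_r; [apply Rlt_le, exp_pos | exact Hstart] |].
    rewrite Rmult_assoc. apply Rmult_le_compat_l; [| apply exp_split_le; lra].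
    pose proof drift_ratio_nonneg. unfold A. lra. }
  pose proof (Hxs_in t ltac:(lra)). pose proof drift_ratio_nonneg.
  assert (Rabs (grid i - xs t) <= grid i - xs t + 2 * delta) by (apply Rabs_le; lra).
  lra.
Qed.

Lemma jump_chain_error (i : nat) (t : R) : 0 <= t <= T ->
  jump_admissible F bI x0 delta (t / delta ^ 2) i ->
  ~ jump_admissible F bI x0 delta (t / delta ^ 2) (S i) ->
  Rabs (grid i - xs t) <= delta * ((2 + (K + 2 * L) / L) * exp (L * T) + 1).
Proof.
  intros Ht [Hi [Hpos Hsum]] Hlast.
  assert (Hreach : reachable i) by now split.
  replace (delta * ((2 + (K + 2 * L) / L) * exp (L * T) + 1))
    with ((A + delta) * exp (L * T) + delta) by (unfold A, drift; field; lra).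
  apply jump_time_le_iff in Hsum.
  destruct (Rle_lt_dec (grid (S i)) bI) as [Hnext | Hend]; rewrite grid_S in *.
  - destruct (Rlt_le_dec 0 (F i)) as [HFi | HFi].
    + assert (Hbefore : t < jump_time (S i)).
      { apply Rnot_le_lt. intros Hle. apply Hlast.
        split; [rewrite <- grid_S in Hnext; exact Hnext | split].
        - intros k Hk. destruct (Nat.eq_dec k i) as [-> | Hne]; [exact HFi | apply Hpos; lia].
        - now apply jump_time_le_iff. }
      apply (error_after_last_jump i t (F i / delta)); [exact Hreach | lra | |].
      * intros u Hu. apply interpolation_le; lra.
      * pose proof (slope_error i Hnext). nra.
    + apply (error_after_last_jump i t 0); [exact Hreach | lra | |].
      * intros u _. rewrite Rmult_0_r, Rabs_R0. lra.
      * rewrite Rminus_0_l, Rabs_Ropp. now apply stuck_gradient_bound.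
  - apply error_at_right_end; [exact Hreach | lra | exact Hend].
Qed.

End JumpChain.

Lemma step_fit_expansion (b d : R -> R) (c : R -> R -> R) (aI bI x0 delta K : R) :
  aI <= x0 -> 0 < delta ->
  (forall x h, aI <= x -> 0 < h -> x + h <= bI ->
     Rabs (fit b d c (x + h) x - h * Derive (fun y => fit b d c y x) x) <= K * (h * h)) ->
  forall k, grid x0 delta k + delta <= bI ->
    Rabs (step_fit b d c x0 delta k
          - delta * Derive (fun y => fit b d c y (grid x0 delta k)) (grid x0 delta k))
    <= K * (delta * delta).
Proof.
  intros Hx0 Hdelta Htaylor k Hk. unfold step_fit, grid in *.
  rewrite S_INR, Rmult_plus_distr_r, Rmult_1_l, <- Rplus_assoc.
  pose proof (pos_INR k). apply Htaylor; nra.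
Qed.

Theorem theorem2 (aI bI : R) (b d : R -> R) (c : R -> R -> R) (x0 : R)
    (g : R -> R -> R) (T : R) (xs : R -> R) :
  aI < bI ->
  C2_1 b -> C2_1 d -> C2_2 c ->
  (forall x, aI <= x <= bI -> 0 <= b x /\ 0 <= d x) ->
  (forall x y, aI <= x <= bI -> aI <= y <= bI -> 0 <= c x y) ->
  (forall x, aI <= x <= bI -> d x < b x /\ 0 < c x x) ->
  aI < x0 < bI ->
  (forall delta, 0 < delta -> aI <= x0 - delta -> x0 + delta <= bI ->
     ~ local_fit_min b d c delta x0 /\ ~ local_fit_max b d c delta x0) ->
  0 <= Derive (fun y => fit b d c y x0) x0 ->
  resident_path b d c bI x0 g ->
  0 < T ->
  xs 0 = x0 ->
  (forall t, 0 <= t <= T -> aI <= xs t <= bI) ->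
  (forall t, 0 <= t <= T ->
     is_derive xs t (Derive (fun y => fit b d c y (xs t)) (xs t))) ->
  forall eps, 0 < eps ->
    exists eta, 0 < eta /\
      forall delta, 0 < delta < eta ->
        forall t, 0 <= t <= T -> Rabs (g delta (t / delta ^ 2) - xs t) < eps.
Proof.
  intros HI Hb Hd Hc _ _ Hpos Hx0 _ Hs0 Hg HT Hxs0 Hxs_in Hxs eps Heps.
  assert (Hcxx : forall x, aI <= x <= bI -> 0 < c x x) by (apply Hpos).
  set (s := fun x => Derive (fun y => fit b d c y x) x) in *.
  destruct (fit_gradient_lipschitz aI bI b d c ltac:(lra) Hb Hd Hc Hcxx) as [L0 Hlip].
  destruct (fit_step_taylor aI bI b d c ltac:(lra) Hb Hd Hc Hcxx) as [K [HK Htaylor]].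
  set (L := Rabs L0 + 1).
  assert (HL : 0 < L) by (pose proof (Rabs_pos L0); unfold L; lra).
  assert (Hs : lipschitz_with L aI bI s).
  { apply (lipschitz_with_le L0); [| exact Hlip]. pose proof (Rle_abs L0). unfold L. lra. }
  set (C := (2 + (K + 2 * L) / L) * exp (L * T) + 1).
  assert (HC : 0 < C).
  { assert (0 <= (K + 2 * L) / L)
      by (apply Rmult_le_pos; [lra | apply Rlt_le, Rinv_0_lt_compat, HL]).
    pose proof (exp_pos (L * T)). unfold C. nra. }
  exists (eps / C). split; [apply Rdiv_lt_0_compat; lra |].
  intros delta [Hdelta Hsmall] t Ht.
  destruct (Hg delta (t / delta ^ 2) Hdelta) as [i [Hadm [Hmax ->]]].
  { apply Rmult_le_pos; [lra | apply Rlt_le, Rinv_0_lt_compat, pow_lt, Hdelta]. }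
  apply Rle_lt_trans with (delta * C).
  - apply (jump_chain_error aI bI x0 T L K delta s xs (step_fit b d c x0 delta)
             HL HK Hdelta ltac:(lra) Hs Hs0
             (step_fit_expansion b d c aI bI x0 delta K ltac:(lra) Hdelta Htaylor)
             Hxs0 Hxs_in Hxs i t Ht Hadm).
    intros Hnext. specialize (Hmax _ Hnext). lia.
  - apply (Rmult_lt_compat_r C) in Hsmall; [| exact HC].
    replace (eps / C * C) with eps in Hsmall by (field; lra). exact Hsmall.
Qed.
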